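(* Let $N\ge2$, $\mu>0$, $2<p<2+\frac4N$, $c>0$, $u\in S(c)$, and $k_0=\frac{p\gamma_pN}{2(2-p\gamma_p)}c^2$. If $P(u)\le0$ and $\|\nabla u\|_2^2=k_0$, then $$c\ge D=\left(\frac{1}{\mu\gamma_pC(N,p)^p}\Big(\frac{N}{2-p\gamma_p}\Big)^{\frac{2-p\gamma_p}{2}}\Big(\frac{p\gamma_p}{2}\Big)^{-\frac{p\gamma_p}{2}}\right)^{\frac1{p-2}}.$$ Moreover, if $P(u)<0$ and $\|\nabla u\|_2^2=k_0$, then $c>D$.
   Context: Case $\alpha=-1$. $\gamma_p=\frac{N(p-2)}{2p}$, $C(N,p)$ the best constant in $\|u\|_p\le C(N,p)\|\nabla u\|_2^{\gamma_p}\|u\|_2^{1-\gamma_p}$. $W=\{u\in H^1(\mathbb{R}^N):\int u^2|\log u^2|<\infty\}$, $S(c)=\{u\in W:\|u\|_2=c\}$, $P(u)=\|\nabla u\|_2^2+\frac N2c^2-\mu\gamma_p\|u\|_p^p$. *)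

(* Functions on R^N are functions 'rV[R]_N -> R. *)
From HB Require Import structures.
From mathcomp Require Import all_boot all_order all_algebra.
From mathcomp Require Import all_classical all_reals all_analysis.
Set Implicit Arguments. Unset Strict Implicit. Unset Printing Implicit Defensive.
Import Order.TTheory GRing.Theory Num.Theory.
Import numFieldNormedType.Exports.
Local Open Scope classical_set_scope.
Local Open Scope ring_scope.

Section Sobolev.
Variables (R : realType) (N : nat).
Local Notation V := 'rV[R]_N.

Definition borelN (f : V -> R) : Prop :=
  forall B : set R, measurable B -> <<s [set A : set V | open A] >> (f @^-1` B).

Definition updc (x : V) (m : nat) (t : R) : V :=
  \row_(j < N) (if (j : nat) == m then t else x 0 j).

(* Lebesgue integral on R^N, as the iterated integral over the coordinates
   (Tonelli/Fubini) with respect to the Lebesgue measure on R. *)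
Fixpoint iter_int (k : nat) (f : V -> \bar R) (x : V) : \bar R :=
  match k with
  | 0 => f x
  | m.+1 => (\int[lebesgue_measure]_(t in [set: R]) iter_int m f (updc x m t))%E
  end.

Definition intRN (f : V -> \bar R) : \bar R := iter_int N f 0.

Definition L2 (u : V -> R) : Prop :=
  borelN u /\ (intRN (fun x => ((u x) ^+ 2)%:E) < +oo)%E.

Definition norm2 (u : V -> R) : R := Num.sqrt (fine (intRN (fun x => ((u x) ^+ 2)%:E))).
Definition normp_pow (u : V -> R) (p : R) : R := fine (intRN (fun x => (`|u x| `^ p)%:E)).
Definition normp (u : V -> R) (p : R) : R := normp_pow u p `^ p^-1.

Definition dpart (i : 'I_N) (f : V -> R) : V -> R := 'D_(delta_mx 0 i) f.
Definition iterd (s : seq 'I_N) (f : V -> R) : V -> R := foldr dpart f s.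
Definition smooth (f : V -> R) : Prop :=
  forall s : seq 'I_N, continuous (iterd s f) /\
    forall (i : 'I_N) (x : V), derivable (iterd s f) x (delta_mx 0 i).
Definition compact_support (f : V -> R) : Prop :=
  exists M : R, forall x : V, M < `|x| -> f x = 0.
Definition test_fun (f : V -> R) : Prop := smooth f /\ compact_support f.

Definition weak_grad (u : V -> R) (g : 'I_N -> V -> R) : Prop :=
  forall (i : 'I_N) (phi : V -> R), test_fun phi ->
    intRN (fun x => (u x * dpart i phi x)%:E) =
    (- intRN (fun x => (g i x * phi x)%:E))%E.

Definition H1 (u : V -> R) (g : 'I_N -> V -> R) : Prop :=
  L2 u /\ (forall i, L2 (g i)) /\ weak_grad u g.

Definition grad_norm2sq (g : 'I_N -> V -> R) : R := \sum_(i < N) (norm2 (g i)) ^+ 2.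

Definition inW (u : V -> R) (g : 'I_N -> V -> R) : Prop :=
  H1 u g /\ (intRN (fun x => ((u x) ^+ 2 * `|ln ((u x) ^+ 2)|)%:E) < +oo)%E.
Definition inS (c : R) (u : V -> R) (g : 'I_N -> V -> R) : Prop :=
  inW u g /\ norm2 u = c.

Definition gamma_p (p : R) : R := (N%:R * (p - 2)) / (2 * p).

Definition GN_ineq (p C : R) : Prop :=
  forall u g, H1 u g ->
    normp u p <= C * (Num.sqrt (grad_norm2sq g)) `^ (gamma_p p)
                   * (norm2 u) `^ (1 - gamma_p p).

Definition GN_const (p : R) : R := inf [set C : R | 0 <= C /\ GN_ineq p C].

(* the Pohozaev-type functional P(u) (with ||u||_2 = c) *)
Definition Pohozaev (mu p c : R) (u : V -> R) (g : 'I_N -> V -> R) : R :=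
  grad_norm2sq g + N%:R / 2 * c ^+ 2 - mu * gamma_p p * normp_pow u p.

End Sobolev.

From HB Require Import structures.
From mathcomp Require Import all_boot all_order all_algebra.
From mathcomp Require Import all_classical all_reals all_analysis.
From mathcomp Require Import ring lra.
Import Order.TTheory GRing.Theory Num.Theory.
Local Open Scope classical_set_scope.
Local Open Scope ring_scope.

(** On the constraint [||grad u||_2^2 = k0] the Pohozaev inequality reads
    [N/(2 - p gp) c^2 <= mu gp ||u||_p^p], while Gagliardo-Nirenberg bounds
    [||u||_p^p] by [C^p k0^(p gp/2) c^(p(1 - gp))].  Since [k0] is a multiple of
    [c^2], the right-hand side is a multiple of [c^p], and comparing the two
    bounds gives [c^(p-2) >= D^(p-2)].  After taking logarithms every step is
    linear. *)

Section GammaP.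
Set Implicit Arguments.
Unset Strict Implicit.
Variables (R : realType) (N : nat) (p : R).
Hypotheses (N_gt0 : (0 < N)%N) (p_gt2 : 2 < p).

Lemma gamma_p_gt0 : 0 < gamma_p N p.
Proof.
by rewrite /gamma_p divr_gt0 ?mulr_gt0 ?ltr0n ?subr_gt0 // (lt_trans _ p_gt2).
Qed.

Lemma mulr_gamma_p_lt2 : p < 2 + 4 / N%:R -> p * gamma_p N p < 2.
Proof.
have n_gt0 : 0 < N%:R :> R by rewrite ltr0n.
have -> : p * gamma_p N p = N%:R * (p - 2) / 2.
  by rewrite /gamma_p; field; rewrite lt0r_neq0 // (lt_trans _ p_gt2).
move=> p_lt; rewrite ltr_pdivrMr // (_ : 2 * 2 = N%:R * (4 / N%:R)).
  by rewrite ltr_pM2l //; lra.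
by field; rewrite lt0r_neq0.
Qed.

End GammaP.

Section BestGNConstant.
Variables (R : realType) (N : nat) (p : R).

Lemma GN_const_eq0 : ~ (exists C : R, 0 <= C /\ GN_ineq N p C) -> GN_const N p = 0.
Proof.
move=> noC; rewrite /GN_const (_ : [set C | _] = set0) ?inf0 //.
by apply/seteqP; split=> // C C_GN; apply: noC; exists C.
Qed.

Lemma GN_const_ge0 : 0 <= GN_const N p.
Proof.
have [[C0 C0_admissible]|noC] := pselect (exists C : R, 0 <= C /\ GN_ineq N p C).
  by apply: lb_le_inf; [exists C0 | move=> C []].
by rewrite GN_const_eq0.
Qed.

Lemma GN_ineq_GN_const :
  (exists C : R, 0 <= C /\ GN_ineq N p C) -> GN_ineq N p (GN_const N p).
Proof.
move=> [C0 [C0_ge0 C0_GN]] u g u_H1; rewrite -mulrA.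
set X := _ `^ _ * _ `^ _.
have X_ge0 : 0 <= X by rewrite mulr_ge0 ?powR_ge0.
have [X0 | X_gt0] := eqVneq X 0.
  by have := C0_GN u g u_H1; rewrite -mulrA -/X X0 !mulr0.
have {X_gt0 X_ge0}X_gt0 : 0 < X by rewrite lt_def X_gt0.
rewrite -ler_pdivrMr //; apply: lb_le_inf; first by exists C0.
move=> C [_ C_GN]; rewrite ler_pdivrMr //.
by have := C_GN u g u_H1; rewrite -mulrA.
Qed.

End BestGNConstant.

Section MassThreshold.
Set Implicit Arguments.
Unset Strict Implicit.
Variable R : realType.

(* [critical_kinetic] is the paper's [k0] and [mass_threshold] its [D], with
   [n] in place of [N]. *)
Definition critical_kinetic (n p gp c : R) : R :=
  (p * gp * n) / (2 * (2 - p * gp)) * c ^+ 2.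

Definition mass_threshold (n mu p gp C : R) : R :=
  ((mu * gp * C `^ p)^-1 * (n / (2 - p * gp)) `^ ((2 - p * gp) / 2)
   * (p * gp / 2) `^ (- (p * gp / 2))) `^ (p - 2)^-1.

Definition gn_bound (C gp s m : R) : R := C * s `^ gp * m `^ (1 - gp).

Lemma mass_threshold_ge0 (n mu p gp C : R) : 0 <= mass_threshold n mu p gp C.
Proof. exact: powR_ge0. Qed.

(* With no admissible constant, [GN_const] is [inf set0 = 0], and so is [D]. *)
Lemma mass_threshold0 (n mu p gp : R) : 2 < p -> mass_threshold n mu p gp 0 = 0.
Proof.
move=> p_gt2; rewrite /mass_threshold powR0 ?gt_eqF ?(lt_trans _ p_gt2) //.
by rewrite mulr0 invr0 !mul0r powR0 // invr_eq0 subr_eq0 gt_eqF.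
Qed.

Variables (n mu p gp : R).
Hypotheses (n_gt0 : 0 < n) (mu_gt0 : 0 < mu) (p_gt2 : 2 < p)
  (gp_gt0 : 0 < gp) (pgp_lt2 : p * gp < 2).

Let p_gt0 : 0 < p.
Proof. exact: lt_trans p_gt2. Qed.

Let p_sub2_gt0 : 0 < p - 2.
Proof. by rewrite subr_gt0. Qed.

Let pgp_gt0 : 0 < p * gp.
Proof. exact: mulr_gt0. Qed.

Let kinetic_denom_gt0 : 0 < 2 - p * gp.
Proof. by rewrite subr_gt0. Qed.

(* [a] and [b] stand for [p gp / 2] and [N / (2 - p gp)], so that
   [k0 = a b c^2] and [D^(p-2) = b^(1-a) a^(-a) / (mu gp C^p)]. *)
Lemma ln_threshold_identity (a b C c : R) :
  0 < a -> 0 < b -> 0 < C -> 0 < c -> gp = 2 * a / p ->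
  (p - 2) *
    (ln c - ln (((mu * gp * C `^ p)^-1 * b `^ (1 - a) * a `^ (- a)) `^ (p - 2)^-1))
  = ln (mu * gp) + p * ln (gn_bound C gp (Num.sqrt (a * b * c ^+ 2)) c)
    - ln (b * c ^+ 2).
Proof.
move=> a_gt0 b_gt0 C_gt0 c_gt0 gpE.
have c2_gt0 : 0 < c ^+ 2 := exprn_gt0 2 c_gt0.
have k_gt0 : 0 < a * b * c ^+ 2 by rewrite !mulr_gt0.
have ln_c2 : ln (c ^+ 2) = 2 * ln c by rewrite lnXn // mulr_natl.
have ln_k : ln (a * b * c ^+ 2) = ln a + ln b + 2 * ln c.
  by rewrite (lnM (x := a * b)) ?posrE ?mulr_gt0 // (lnM (x := a)) // ln_c2.
have ln_K : ln ((mu * gp * C `^ p)^-1 * b `^ (1 - a) * a `^ (- a)) =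
    - (ln mu + ln gp + p * ln C) + (1 - a) * ln b - a * ln a.
  have muC_gt0 : 0 < mu * gp * C `^ p by rewrite !mulr_gt0 ?powR_gt0.
  rewrite !lnM ?posrE ?mulr_gt0 ?invr_gt0 ?powR_gt0 // lnV ?posrE //.
  by rewrite !lnM ?posrE ?mulr_gt0 ?powR_gt0 // !ln_powR opprD mulNr.
have ln_GN : p * ln (gn_bound C gp (Num.sqrt (a * b * c ^+ 2)) c) =
    p * ln C + a * (ln a + ln b + 2 * ln c) + (p - 2 * a) * ln c.
  rewrite /gn_bound -powR12_sqrt ?ltW //.
  rewrite (lnM (x := C * _)) ?posrE ?mulr_gt0 ?powR_gt0 //.
  rewrite (lnM (x := C)) ?posrE ?powR_gt0 //.
  by rewrite !ln_powR ln_k gpE; field; rewrite lt0r_neq0.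
rewrite ln_powR (lnM (x := b)) // ln_c2 ln_K ln_GN lnM //.
by field; rewrite lt0r_neq0.
Qed.

Lemma ln_mass_threshold (C c : R) : 0 < C -> 0 < c ->
  (p - 2) * (ln c - ln (mass_threshold n mu p gp C)) =
  ln (mu * gp) + p * ln (gn_bound C gp (Num.sqrt (critical_kinetic n p gp c)) c)
  - ln (critical_kinetic n p gp c + n / 2 * c ^+ 2).
Proof.
move=> C_gt0 c_gt0.
have kineticE : critical_kinetic n p gp c = p * gp / 2 * (n / (2 - p * gp)) * c ^+ 2.
  by rewrite /critical_kinetic; field; rewrite lt0r_neq0.
have energyE : critical_kinetic n p gp c + n / 2 * c ^+ 2 = n / (2 - p * gp) * c ^+ 2.
  by rewrite /critical_kinetic; field; rewrite lt0r_neq0.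
have expE : (2 - p * gp) / 2 = 1 - p * gp / 2 by field.
rewrite energyE kineticE /mass_threshold expE ln_threshold_identity ?divr_gt0 //.
by field; rewrite lt0r_neq0.
Qed.

Lemma critical_energy_gt0 (c : R) : 0 < c ->
  0 < critical_kinetic n p gp c + n / 2 * c ^+ 2.
Proof.
move=> c_gt0; apply: addr_gt0; last by rewrite mulr_gt0 ?exprn_gt0 ?divr_gt0.
by rewrite /critical_kinetic mulr_gt0 ?exprn_gt0 // divr_gt0 ?mulr_gt0.
Qed.

Lemma mass_threshold_gap (C c Q : R) : 0 <= C -> 0 < c -> 0 < Q ->
  Q `^ p^-1 <= gn_bound C gp (Num.sqrt (critical_kinetic n p gp c)) c ->
  ln (mu * gp * Q) - ln (critical_kinetic n p gp c + n / 2 * c ^+ 2)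
  <= (p - 2) * (ln c - ln (mass_threshold n mu p gp C)).
Proof.
move=> C_ge0 c_gt0 Q_gt0 GN.
have GN_gt0 := lt_le_trans (powR_gt0 p^-1 Q_gt0) GN.
have C_gt0 : 0 < C.
  rewrite lt_def C_ge0 andbT; apply: contraTneq GN_gt0 => ->.
  by rewrite /gn_bound !mul0r ltxx.
have ln_GN : ln Q <= p * ln (gn_bound C gp (Num.sqrt (critical_kinetic n p gp c)) c).
  by rewrite -ler_pdivrMl // -ln_powR ler_ln ?posrE ?powR_gt0.
by rewrite ln_mass_threshold // lnM ?posrE ?mulr_gt0 //; lra.
Qed.

Lemma mass_threshold_le (C c Q : R) : 0 <= C -> 0 < c ->
  Q `^ p^-1 <= gn_bound C gp (Num.sqrt (critical_kinetic n p gp c)) c ->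
  critical_kinetic n p gp c + n / 2 * c ^+ 2 <= mu * gp * Q ->
  mass_threshold n mu p gp C <= c.
Proof.
move=> C_ge0 c_gt0 GN pohozaev.
have E_gt0 := critical_energy_gt0 c_gt0.
have Q_gt0 : 0 < Q by rewrite -(pmulr_rgt0 _ (mulr_gt0 mu_gt0 gp_gt0)) (lt_le_trans E_gt0).
have gap := mass_threshold_gap C_ge0 c_gt0 Q_gt0 GN.
have := mass_threshold_ge0 n mu p gp C; rewrite le_eqVlt => /predU1P[<- | D_gt0].
  exact: ltW.
rewrite -ler_ln ?posrE // -subr_ge0 -(pmulr_rge0 _ p_sub2_gt0) (le_trans _ gap) //.
by rewrite subr_ge0 ler_ln ?posrE ?mulr_gt0.
Qed.

Lemma mass_threshold_lt (C c Q : R) : 0 <= C -> 0 < c ->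
  Q `^ p^-1 <= gn_bound C gp (Num.sqrt (critical_kinetic n p gp c)) c ->
  critical_kinetic n p gp c + n / 2 * c ^+ 2 < mu * gp * Q ->
  mass_threshold n mu p gp C < c.
Proof.
move=> C_ge0 c_gt0 GN pohozaev.
have E_gt0 := critical_energy_gt0 c_gt0.
have Q_gt0 : 0 < Q by rewrite -(pmulr_rgt0 _ (mulr_gt0 mu_gt0 gp_gt0)) (lt_trans E_gt0).
have gap := mass_threshold_gap C_ge0 c_gt0 Q_gt0 GN.
have := mass_threshold_ge0 n mu p gp C; rewrite le_eqVlt => /predU1P[<- // | D_gt0].
rewrite -ltr_ln ?posrE // -subr_gt0 -(pmulr_rgt0 _ p_sub2_gt0) (lt_le_trans _ gap) //.
by rewrite subr_gt0 ltr_ln ?posrE ?mulr_gt0.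
Qed.

End MassThreshold.

Theorem lemma7p3 (R : realType) (N : nat) (mu p c : R)
  (u : 'rV[R]_N -> R) (g : 'I_N -> 'rV[R]_N -> R) :
  (2 <= N)%N -> 0 < mu -> 2 < p -> p < 2 + 4 / N%:R -> 0 < c ->
  inS c u g ->
  let gp := gamma_p N p in
  let k0 := (p * gp * N%:R) / (2 * (2 - p * gp)) * c ^+ 2 in
  let D := ((mu * gp * GN_const N p `^ p)^-1
             * (N%:R / (2 - p * gp)) `^ ((2 - p * gp) / 2)
             * (p * gp / 2) `^ (- (p * gp / 2))) `^ (p - 2)^-1 in
  (Pohozaev mu p c u g <= 0 -> grad_norm2sq g = k0 -> D <= c) /\
  (Pohozaev mu p c u g < 0 -> grad_norm2sq g = k0 -> D < c).
Proof.
move=> N_ge2 mu_gt0 p_gt2 p_lt c_gt0 [[u_H1 _] u_c] gp k0 D.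
have N_gt0 : (0 < N)%N by apply: leq_trans N_ge2.
have n_gt0 : 0 < N%:R :> R by rewrite ltr0n.
have gp_gt0 : 0 < gp := gamma_p_gt0 N_gt0 p_gt2.
have pgp_lt2 : p * gp < 2 := mulr_gamma_p_lt2 N_gt0 p_gt2 p_lt.
have DE : D = mass_threshold N%:R mu p gp (GN_const N p) by [].
have [GN_exists | no_GN] := pselect (exists C : R, 0 <= C /\ GN_ineq N p C); last first.
  rewrite DE GN_const_eq0 // mass_threshold0 //.
  by split=> _ _ //; exact: ltW.
have GN_u := GN_ineq_GN_const GN_exists u_H1; rewrite u_c in GN_u.
have C_ge0 := GN_const_ge0 N p.
split=> pohozaev kinetic; rewrite kinetic in GN_u.
- apply: (mass_threshold_le n_gt0 mu_gt0 p_gt2 gp_gt0 pgp_lt2 C_ge0 c_gt0 GN_u).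
  by rewrite /Pohozaev subr_le0 kinetic in pohozaev.
- apply: (mass_threshold_lt n_gt0 mu_gt0 p_gt2 gp_gt0 pgp_lt2 C_ge0 c_gt0 GN_u).
  by rewrite /Pohozaev subr_lt0 kinetic in pohozaev.
Qed.
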